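(* Let $N\ge1$, $n\ge1$, and let $f=f(w)$ be a polynomial in one variable. Then in $\tilde{\mathcal A}_\hbar$, $$\Big[\sum_{i=1}^N\bar B_n(\bar w_i),E_1[f]\Big]=-\hbar\,E_1[f\cdot(\bar w+\hbar)^{n-1}],\qquad\Big[\sum_{i=1}^N\bar B_n(\bar w_i),F_1[f]\Big]=\hbar\,F_1[f\cdot(\bar w+\hbar)^{n-1}],$$ where $\bar w_i=w_i-(N-1)\mathbf t$ and $f\cdot(\bar w+\hbar)^{n-1}$ denotes the polynomial $w\mapsto f(w)\,(w-(N-1)\mathbf t+\hbar)^{n-1}$.
   Context: $\tilde{\mathcal A}_\hbar$ is the $\mathbb C[\hbar,\mathbf t]$-algebra generated by $w_1,\dots,w_N$, $\mathsf u_1^{\pm1},\dots,\mathsf u_N^{\pm1}$, $(w_i-w_j)^{-1}$ ($i\ne j$) with relations: the $w_i$ and $(w_i-w_j)^{-1}$ pairwise commute, $(w_i-w_j)(w_i-w_j)^{-1}=1$, $[\mathsf u_i,\mathsf u_j]=0$, $\mathsf u_i\mathsf u_i^{-1}=\mathsf u_i^{-1}\mathsf u_i=1$, $[\mathsf u_i^{\pm1},w_j]=\pm\delta_{ij}\hbar\mathsf u_i^{\pm1}$. For a one-variable polynomial $f$: $E_1[f]=\sum_{i=1}^Nf(w_i)\prod_{j\ne i}\frac{w_i-w_j-\mathbf t}{w_i-w_j}\mathsf u_i$ and $F_1[f]=\sum_{i=1}^Nf(w_i-\hbar)\prod_{j\ne i}\frac{w_i-w_j+\mathbf t}{w_i-w_j}\mathsf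 u_i^{-1}$. $B_n$ are the Bernoulli polynomials ($B_n(x+1)-B_n(x)=nx^{n-1}$, $\int_0^1B_n=0$) and $\bar B_n(w)=(-\hbar)^nB_n(-w/\hbar)/n$. *)

From HB Require Import structures.
From mathcomp Require Import all_boot all_order all_algebra complex.
From mathcomp Require Import Rstruct.
Set Implicit Arguments. Unset Strict Implicit. Unset Printing Implicit Defensive.
Import Order.TTheory GRing.Theory Num.Theory.
Local Open Scope ring_scope.

Notation CC := (Rdefinitions.R[i]).

Definition prim (p : {poly CC}) : {poly CC} :=
  \poly_(i < (size p).+1) (if i is k.+1 then p`_k / k.+1%:R else 0).

(* B_0 = 1 ; B_n = n * prim B_{n-1} - (int_0^1 n * prim B_{n-1}) ,
   i.e. B_n' = n B_{n-1} and int_0^1 B_n = 0. This is the standard definition,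
   equivalent to B_n(x+1)-B_n(x) = n x^(n-1), int_0^1 B_n = 0. *)
Fixpoint bernoulli (n : nat) : {poly CC} :=
  match n with
  | 0 => 1
  | m.+1 => let P := m.+1%:R *: prim (bernoulli m) in P - ((prim P).[1])%:P
  end.

Section Alg.
Variable A : algType CC.

Definition comm (x y : A) : A := x * y - y * x.

(* Coefficients in C[hbar,t]: a polynomial in t whose coefficients are
   polynomials in hbar; evaluated at central elements h, t of A. *)
Definition evc (h t : A) (c : {poly {poly CC}}) : A :=
  \sum_(k < size c) (map_poly (in_alg A) c`_k).[h] * t ^+ k.

(* Evaluation of f in C[hbar,t][w] at x *)
Definition fev (h t : A) (f : {poly {poly {poly CC}}}) (x : A) : A :=
  \sum_(m < size f) evc h t f`_m * x ^+ m.

(* hbar-homogenised Bernoulli: Bbar_n(x) = (-h)^n B_n(-x/h) / n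
   = (1/n) sum_k (B_n)_k (-h)^(n-k) x^k *)
Definition Bbar (h : A) (n : nat) (x : A) : A :=
  (n%:R^-1 : CC) *: \sum_(k < (size (bernoulli n))) 
      ((bernoulli n)`_k *: ((- h) ^+ (n - k) * x ^+ k)).

Variable N : nat.

(* E_1[g] = sum_i g(w_i) prod_{j<>i} (w_i-w_j-t)/(w_i-w_j) u_i *)
Definition E1 (t : A) (w : 'I_N -> A) (d : 'I_N -> 'I_N -> A) (u : 'I_N -> A)
    (g : A -> A) : A :=
  \sum_(i < N) g (w i) * (\prod_(j < N | j != i) ((w i - w j - t) * d i j)) * u i.

(* F_1[g] = sum_i g(w_i - h) prod_{j<>i} (w_i-w_j+t)/(w_i-w_j) u_i^{-1} *)
Definition F1 (h t : A) (w : 'I_N -> A) (d : 'I_N -> 'I_N -> A) (ui : 'I_N -> A)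
    (g : A -> A) : A :=
  \sum_(i < N) g (w i - h) * (\prod_(j < N | j != i) ((w i - w j + t) * d i j)) * ui i.

(* The defining relations of \tilde A_hbar (over C[hbar,t]) for generators
   w_i, u_i, ui_i (= u_i^{-1}), d i j (= (w_i - w_j)^{-1}, i <> j),
   with h, t the (central) images of hbar and t. *)
Definition Arels (h t : A) (w : 'I_N -> A) (d : 'I_N -> 'I_N -> A)
    (u ui : 'I_N -> A) : Prop :=
  (forall x, h * x = x * h) /\ (forall x, t * x = x * t) /\
      (forall i j, w i * w j = w j * w i) /\
      (forall i k l, k != l -> w i * d k l = d k l * w i) /\
      (forall i j k l, i != j -> k != l -> d i j * d k l = d k l * d i j) /\
      (forall i j, i != j -> (w i - w j) * d i j = 1) /\
      (forall i j, u i * u j = u j * u i) /\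
      (forall i, u i * ui i = 1 /\ ui i * u i = 1) /\
      (forall i j, comm (u i) (w j) = (i == j)%:R * h * u i) /\
      (forall i j, comm (ui i) (w j) = - ((i == j)%:R * h * ui i)).

End Alg.

From HB Require Import structures.
From mathcomp Require Import all_boot all_order all_algebra complex.
From mathcomp Require Import Rstruct.
Import GRing.Theory Num.Theory.

(* Each u_i^{+-1} commutes with the w_j, j <> i, and shifts w_i by +-hbar, so it
   conjugates S = sum_j Bbar_n(wbar_j) into the same sum with wbar_i shifted:
   u_i S = (S + hbar (wbar_i + hbar)^(n-1)) u_i and
   u_i^-1 S = (S - hbar wbar_i^(n-1)) u_i^-1.  The increments come from
   B_n(x + 1) - B_n(x) = n x^(n-1), homogenised in degree n; the identity itself
   follows from B_n' = n B_(n-1) and the normalisation int_0^1 B_n = 0.  The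
   coefficients of E_1 and F_1 are built from the w's, the d's, hbar and t and
   commute with S, so the commutator is computed summand by summand. *)

Set Implicit Arguments. Unset Strict Implicit. Unset Printing Implicit Defensive.
Local Open Scope ring_scope.

Lemma coef_prim p i : (prim p)`_i = if i is k.+1 then p`_k / k.+1%:R else 0.
Proof.
rewrite coef_poly; case: i => [|k]; first by case: (0 < _)%N.
by rewrite ltnS; case: ltnP => // /(nth_default 0) ->; rewrite mul0r.
Qed.

Lemma primB p q : prim (p - q) = prim p - prim q.
Proof.
by apply/polyP => -[|k]; rewrite coefB !coef_prim ?subr0 // coefB mulrBl.
Qed.

Lemma primC c : prim c%:P = c *: 'X.
Proof.
apply/polyP => -[|[|k]]; rewrite coefZ coefX coef_prim ?mulr0 //.
  by rewrite coefC divr1 mulr1.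
by rewrite coefC mul0r.
Qed.

Lemma prim0 p : (prim p).[0] = 0.
Proof. by rewrite horner_coef0 coef_prim. Qed.

Lemma deriv_prim p : (prim p)^`() = p.
Proof.
apply/polyP => i; rewrite coef_deriv coef_prim /= -[LHS]mulr_natr divfK //.
by rewrite pnatr_eq0.
Qed.

Lemma eq_deriv_horner0 (R : numDomainType) (p q : {poly R}) :
  p^`() = q^`() -> p.[0] = q.[0] -> p = q.
Proof.
move=> dpq pq0; apply/polyP => -[|k]; first by rewrite -!horner_coef0.
have /eqP := congr1 (fun r : {poly R} => r`_k) dpq.
by rewrite !coef_deriv -subr_eq0 -mulrnBl mulrn_eq0 subr_eq0 /= => /eqP.
Qed.

Lemma deriv_bernoulli m : (bernoulli m.+1)^`() = m.+1%:R *: bernoulli m.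
Proof. by rewrite /= derivB derivC subr0 derivZ deriv_prim. Qed.

Lemma prim_bernoulli1 m : (prim (bernoulli m)).[1] = (m == 0)%:R.
Proof.
case: m => [|m] /=; first by rewrite -polyC1 primC hornerZ hornerX mulr1.
by rewrite primB primC hornerD hornerN hornerZ hornerX mulr1 subrr.
Qed.

Lemma bernoulli_1_sub_0 m :
  (bernoulli m.+1).[1] - (bernoulli m.+1).[0] = m.+1%:R * (m == 0)%:R.
Proof.
rewrite /= !(hornerD, hornerN, hornerC, hornerZ) prim0 mulr0 sub0r opprK subrK.
by rewrite prim_bernoulli1.
Qed.

Lemma size_bernoulli n : (size (bernoulli n) <= n.+1)%N.
Proof.
elim: n => [|n IH] /=; first by rewrite size_poly1.
rewrite (leq_trans (size_polyD _ _)) // geq_max size_polyN size_polyC.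
rewrite (leq_trans (leq_b1 _)) // andbT (leq_trans (size_scale_leq _ _)) //.
exact: leq_trans (size_poly _ _) _.
Qed.

Lemma bernoulli_shift m :
  bernoulli m \Po ('X + 1) = bernoulli m + m%:R *: 'X^(m.-1).
Proof.
elim: m => [|m IH]; first by rewrite comp_polyC scale0r addr0.
have := deriv_bernoulli m; have := bernoulli_1_sub_0 m.
move: (bernoulli m.+1) => b b10 db; apply: eq_deriv_horner0.
  rewrite deriv_comp !derivD db derivX derivC addr0 mulr1 comp_polyZ IH.
  by rewrite derivZ derivXn scalerDr scaler_nat.
rewrite horner_comp hornerD hornerX hornerC add0r !hornerD hornerZ hornerXn.
by rewrite expr0n -b10 addrC subrK.
Qed.

Lemma mulr_exp_shift (R : pzSemiRingType) (v b b' : R) k :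
  v * b = b' * v -> v * b ^+ k = b' ^+ k * v.
Proof.
move=> vb; elim: k => [|k IH]; first by rewrite mulr1 mul1r.
by rewrite !exprS mulrA vb -mulrA IH mulrA.
Qed.

Section Homogenization.
Variables (R : comNzRingType) (A : algType R).
Implicit Types (a b : A) (p : {poly R}).

(* [a ^+ n * p.[b / a]], with the coefficients of degree > n dropped *)
Definition homog n a b p : A := \sum_(k < n.+1) p`_k *: (a ^+ (n - k) * b ^+ k).

Fact homog_is_linear n a b : linear (homog n a b).
Proof.
move=> c p q; rewrite /homog scaler_sumr -big_split; apply: eq_bigr => k _ /=.
by rewrite coefD coefZ scalerDl scalerA.
Qed.

HB.instance Definition _ n a b :=
  GRing.isLinear.Build R {poly R} A *:%R (homog n a b) (homog_is_linear n a b).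

Lemma homogE n a b p : (size p <= n.+1)%N ->
  homog n a b p = \sum_(k < size p) p`_k *: (a ^+ (n - k) * b ^+ k).
Proof.
move=> sp; rewrite (big_ord_widen _ (fun k => p`_k *: (a ^+ (n - k) * b ^+ k)) sp).
rewrite big_mkcond; apply: eq_bigr => k _ /=.
by case: ltnP => // /(nth_default 0) ->; rewrite scale0r.
Qed.

Lemma homogXn n a b j : (j <= n)%N -> homog n a b 'X^j = a ^+ (n - j) * b ^+ j.
Proof.
move=> jn; rewrite /homog (bigD1 (Ordinal (jn : j < n.+1)%N)) //= coefXn eqxx scale1r.
by rewrite big1 ?addr0 // => k; rewrite -val_eqE coefXn => /negbTE ->; rewrite scale0r.
Qed.

Lemma homog_XaddC_exp n a b c i : GRing.comm a b -> (i <= n)%N ->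
  homog n a b (('X + c%:P) ^+ i) = a ^+ (n - i) * (c *: a + b) ^+ i.
Proof.
move=> ab iin; rewrite addrC exprDn exprDn_comm; last first.
  by rewrite /GRing.comm -scalerAl ab scalerAr.
rewrite linear_sum mulr_sumr; apply: eq_bigr => j _.
have jn : (j <= n)%N := leq_trans (leq_ord j) iin.
rewrite raddfMn !mulrnAr; congr (_ *+ _).
rewrite -polyC_exp mul_polyC /= linearZZ /= homogXn // exprZn -!scalerAl -scalerAr mulrA.
by rewrite -exprD addnBA ?subnK // leq_ord.
Qed.

Lemma homog_comp_XaddC n a b c p : GRing.comm a b -> (size p <= n.+1)%N ->
  homog n a b (p \Po ('X + c%:P)) = homog n a (c *: a + b) p.
Proof.
move=> ab sp; rewrite comp_polyE linear_sum homogE //; apply: eq_bigr => i _.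
by rewrite linearZZ /= homog_XaddC_exp // -ltnS (leq_trans _ sp).
Qed.

Lemma comm_homog n a b p y :
  GRing.comm y a -> GRing.comm y b -> GRing.comm y (homog n a b p).
Proof.
move=> ya yb; apply: commr_sum => k _; rewrite -mulr_algl.
by apply: commrM; [apply/commr_sym/comm_alg | apply: commrM; apply: commrX].
Qed.

Lemma mul_homog_shift n a b b' p v : GRing.comm v a -> v * b = b' * v ->
  v * homog n a b p = homog n a b' p * v.
Proof.
move=> va vb; rewrite mulr_sumr mulr_suml; apply: eq_bigr => k _.
by rewrite -scalerAr -scalerAl mulrA (commrX _ va) -!mulrA (mulr_exp_shift k vb) !mulrA.
Qed.

End Homogenization.

Section BernoulliBar.
Variable A : algType CC.
Implicit Types (h x y v : A) (n : nat).

Lemma Bbar_homog h n x : Bbar h n x = n%:R^-1 *: homog n (- h) x (bernoulli n).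
Proof. by rewrite homogE ?size_bernoulli. Qed.

Lemma Bbar_shift h n x : (0 < n)%N -> GRing.comm x h ->
  Bbar h n (x + h) - Bbar h n x = h * (x + h) ^+ n.-1.
Proof.
(* With x = 1 *: (- h) + (x + h), the shift by h becomes the shift of the
   argument of B_n by 1. *)
case: n => // m _ xh; set y := x + h.
have ex : x = 1 *: (- h) + y by rewrite scale1r addrC addrK.
have hy : GRing.comm (- h) y by rewrite /GRing.comm mulNr mulrN mulrDr mulrDl xh.
rewrite !Bbar_homog -scalerBr; have := bernoulli_shift m.+1.
move: (bernoulli m.+1) (size_bernoulli m.+1) => B sB shB.
rewrite ex -homog_comp_XaddC // polyC1 shB (raddfD (homog _ _ y)) /= linearZZ /=.
rewrite homogXn // subSnn expr1 opprD addrA subrr sub0r scalerN scalerA.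
by rewrite mulVf ?pnatr_eq0 // scale1r mulNr opprK.
Qed.

Lemma comm_Bbar y h n x :
  GRing.comm y h -> GRing.comm y x -> GRing.comm y (Bbar h n x).
Proof.
move=> yh yx; rewrite Bbar_homog -mulr_algl.
by apply: commrM; [apply/commr_sym/comm_alg | apply: comm_homog => //; apply: commrN].
Qed.

Lemma mul_Bbar_shift v h n x x' : GRing.comm v h -> v * x = x' * v ->
  v * Bbar h n x = Bbar h n x' * v.
Proof.
move=> vh vx; rewrite !Bbar_homog -scalerAr -scalerAl.
by rewrite (mul_homog_shift _ _ (commrN vh) vx).
Qed.

End BernoulliBar.

Section Evaluation.
Variable A : algType CC.
Implicit Types (h t x y : A).

Lemma comm_horner_alg y x (q : {poly CC}) :
  GRing.comm y x -> GRing.comm y (map_poly (in_alg A) q).[x].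
Proof.
move=> yx; rewrite horner_coef; apply: commr_sum => i _.
by apply: commrM; [rewrite coef_map; apply/commr_sym/comm_alg | apply: commrX].
Qed.

Lemma comm_fev y h t f x : GRing.comm y h -> GRing.comm y t -> GRing.comm y x ->
  GRing.comm y (fev h t f x).
Proof.
move=> yh yt yx; apply: commr_sum => m _; apply: commrM; last exact: commrX.
apply: commr_sum => k _; apply: commrM; last exact: commrX.
exact: comm_horner_alg.
Qed.

End Evaluation.

Section Commutators.
Variable A : algType CC.
Implicit Types (x y z : A).

Lemma mulr_commE x y z : comm x y = z * x -> x * y = (y + z) * x.
Proof. by move/eqP; rewrite subr_eq mulrDl addrC => /eqP. Qed.

Lemma mulr_central_swap c F P Q v : (forall x, GRing.comm c x) -> GRing.comm P Q ->
  F * P * (c * Q) * v = c * (F * Q * P * v).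
Proof.
by move=> cC PQ; rewrite (cC Q) mulrA -(mulrA F) PQ mulrA -cC [RHS]mulrA.
Qed.

Lemma comm_sum_shift I (r : seq I) (S : A) (c z v : I -> A) :
  (forall i, GRing.comm S (c i)) -> (forall i, v i * S = (S + z i) * v i) ->
  comm S (\sum_(i <- r) c i * v i) = - \sum_(i <- r) c i * z i * v i.
Proof.
move=> Sc vS; rewrite /comm mulr_sumr mulr_suml -sumrB -sumrN.
apply: eq_bigr => i _; rewrite mulrA Sc -!mulrA vS mulrDl.
by rewrite mulrDr opprD addrA subrr sub0r.
Qed.

End Commutators.

Section Relations.
Variables (A : algType CC) (N n : nat) (h t : A).
Variables (w : 'I_N -> A) (d : 'I_N -> 'I_N -> A).
Hypotheses (hC : forall x, GRing.comm h x) (tC : forall x, GRing.comm t x).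
Hypotheses (wC : forall i j, GRing.comm (w i) (w j)).
Hypothesis wdC : forall i k l, k != l -> GRing.comm (w i) (d k l).

Let wbar x := x - (N.-1)%:R * t.
Let S := \sum_(k < N) Bbar h n (wbar (w k)).

Lemma comm_wbar y x : GRing.comm y x -> GRing.comm y (wbar x).
Proof.
by move=> yx; apply: commrB yx (commrM (commr_nat _ _) (commr_sym (tC y))).
Qed.

Definition w_bicommutant y := forall z, (forall j, GRing.comm z (w j)) -> GRing.comm z y.

Lemma Bsum_bicommutant : w_bicommutant S.
Proof.
move=> z zw; apply: commr_sum => k _.
exact: comm_Bbar (commr_sym (hC z)) (comm_wbar (zw k)).
Qed.

Lemma comm_prod_wd y s (i : 'I_N) : w_bicommutant y -> GRing.comm y s ->
  GRing.comm y (\prod_(j < N | j != i) ((w i - w j + s) * d i j)).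
Proof.
move=> yb ys; apply: commr_prod => j ji; apply: commrM.
  by apply: commrD => //; apply: commrB; apply/commr_sym/yb => k; apply: wC.
by apply/commr_sym/yb => k; apply/commr_sym/wdC; rewrite eq_sym.
Qed.

Lemma comm_fev_prod y f x s (i : 'I_N) :
  w_bicommutant y -> GRing.comm y x -> GRing.comm y s ->
  GRing.comm y (fev h t f x * \prod_(j < N | j != i) ((w i - w j + s) * d i j)).
Proof.
move=> yb yx ys; apply: commrM; last exact: comm_prod_wd.
exact: comm_fev (commr_sym (hC y)) (commr_sym (tC y)) yx.
Qed.

Lemma wbar_exp_bicommutant x c k : w_bicommutant x -> (forall y, GRing.comm c y) ->
  w_bicommutant ((wbar x + c) ^+ k).
Proof.
by move=> xb cC z zw; apply/commrX/commrD; [apply/comm_wbar/xb | apply/commr_sym/cC].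
Qed.

Lemma comm_Bsum_summands f s c (x Q v : 'I_N -> A) :
    (forall y, GRing.comm s y) -> (forall y, GRing.comm c y) ->
    (forall i, GRing.comm S (x i)) -> (forall i, w_bicommutant (Q i)) ->
    (forall i, v i * S = (S + c * Q i) * v i) ->
  let P i := \prod_(j < N | j != i) ((w i - w j + s) * d i j) in
  comm S (\sum_(i < N) fev h t f (x i) * P i * v i) =
    - (c * \sum_(i < N) fev h t f (x i) * Q i * P i * v i).
Proof.
move=> sC cC Sx bQ vS P; rewrite (comm_sum_shift _ _ vS) => [|i]; last first.
  exact: comm_fev_prod Bsum_bicommutant (Sx i) (commr_sym (sC S)).
rewrite mulr_sumr; congr (- _); apply: eq_bigr => i _.
by apply: mulr_central_swap => //; apply/commr_sym/comm_prod_wd/commr_sym.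
Qed.

Lemma mul_Bsum_shift v s (i : 'I_N) : GRing.comm v h -> GRing.comm v t ->
  (forall j, v * w j = (w j + (i == j)%:R * s) * v) ->
  v * S = (S + (Bbar h n (wbar (w i) + s) - Bbar h n (wbar (w i)))) * v.
Proof.
move=> vh vt vw.
have vwbar k : v * wbar (w k) = (wbar (w k) + (i == k)%:R * s) * v.
  by rewrite mulrBr vw (commrM (commr_nat v _) vt) -mulrBl addrAC.
rewrite mulr_sumr; under eq_bigr => k _ do rewrite (mul_Bbar_shift n vh (vwbar k)).
rewrite -mulr_suml (bigD1 i) //= /S [in RHS](bigD1 i) //= eqxx mul1r.
congr (_ * v); rewrite [RHS]addrC addrA subrK; congr (_ + _); apply: eq_bigr => k ki.
by rewrite eq_sym (negbTE ki) mul0r addr0.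
Qed.

End Relations.

Unset Implicit Arguments.

Theorem lemma6p4 (A : algType CC) (N n : nat) (hN : (1 <= N)%N) (hn : (1 <= n)%N)
    (h t : A) (w : 'I_N -> A) (d : 'I_N -> 'I_N -> A) (u ui : 'I_N -> A)
    (f : {poly {poly {poly CC}}}) :
  Arels h t w d u ui ->
  let wbar := fun x : A => x - (N.-1)%:R * t in
  let S := \sum_(i < N) Bbar h n (wbar (w i)) in
  let g := fun x : A => fev h t f x * (wbar x + h) ^+ n.-1 in
  comm S (E1 t w d u (fev h t f)) = - (h * E1 t w d u g) /\
  comm S (F1 h t w d ui (fev h t f)) = h * F1 h t w d ui g.
Proof.
move=> [hC [tC [wC [wdC [_ [_ [_ [_ [uw uiw]]]]]]]]] wbar S g.
have hA y : GRing.comm y h := commr_sym (hC y).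
have tA y : GRing.comm y t := commr_sym (tC y).
have nhC y : GRing.comm (- h) y by apply/commr_sym/commrN.
have ntC y : GRing.comm (- t) y by apply/commr_sym/commrN.
have Sw x : (forall j, GRing.comm x (w j)) -> GRing.comm S x.
  by move=> xw; apply/commr_sym/(Bsum_bicommutant n hC tC).
have uS i : u i * S = (S + h * (wbar (w i) + h) ^+ n.-1) * u i.
  rewrite (mul_Bsum_shift n (hA _) (tA _) (fun j => mulr_commE (uw i j))).
  by rewrite Bbar_shift.
have uiS i : ui i * S = (S + - h * (wbar (w i - h) + h) ^+ n.-1) * ui i.
  have uiw' j : ui i * w j = (w j + (i == j)%:R * - h) * ui i.
    by apply: mulr_commE; rewrite uiw mulrN mulNr.
  have -> : wbar (w i - h) = wbar (w i) - h by rewrite /wbar addrAC.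
  rewrite (mul_Bsum_shift n (hA _) (tA _) uiw') mulNr.
  by rewrite -(Bbar_shift hn (hA _)) subrK opprB.
split.
- apply: (comm_Bsum_summands hC tC wC wdC f (Q := fun i => (wbar (w i) + h) ^+ n.-1)) => // i.
    by apply: Sw; apply: wC.
  by apply: wbar_exp_bicommutant => // z; apply.
- rewrite -[RHS]opprK -mulNr.
  apply: (comm_Bsum_summands hC tC wC wdC f (Q := fun i => (wbar (w i - h) + h) ^+ n.-1)) => // i.
    by apply: Sw => j; apply/commr_sym/commrB; [apply: wC | apply: hA].
  by apply: wbar_exp_bicommutant => // z zw; apply: commrB (zw i) (hA z).
Qed.
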